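(* Let $m$ be a positive integer, let $f,g,h\in C^m(\mathbb{R})$ and let $K\subseteq\mathbb{R}$ be compact. If $\gamma=(f,g,h)$ satisfies the $A/V$ condition on $K$, then there is $\hat h\in C^m(\mathbb{R})$ with $\hat h|_K=h|_K$ and $\hat h'=2(f'g-fg')$ on $K$.
   Context: $C^m(\mathbb{R})$: $m$-times continuously differentiable real functions with bounded $m$th derivative. For $\gamma=(f,g,h)$ of class $C^m$ and $a\in\mathbb{R}$, $T_af(x)=\sum_{k=0}^m\frac{f^{(k)}(a)}{k!}(x-a)^k$ (similarly $T_ag$), and $A(\gamma;a,b)= h(b)-h(a)-2\int_a^b\big((T_af)'T_ag-(T_ag)'T_af\big) + 2f(a)(g(b)-T_ag(b)) - 2g(a)(f(b)-T_af(b))$, $V(\gamma;a,b)=(b-a)^{2m}+(b-a)^m\int_a^b(|(T_af)'|+|(T_ag)'|)$. $\gamma$ satisfies the $A/V$ condition on $E\subseteq\mathbb{R}$ if for every $\varepsilon>0$ there is $\delta>0$ with $|A(\gamma;a,b)/V(\gamma;a,b)|<\varepsilon$ for all $a,b\in E$ with $0<b-a<\delta$. *)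

From Stdlib Require Import Reals Factorial.
From Coquelicot Require Import Coquelicot.
Open Scope R_scope.

Definition Cm (m : nat) (f : R -> R) : Prop :=
  (forall k x, (k <= m)%nat -> ex_derive_n f k x) /\
  (forall x, continuous (Derive_n f m) x) /\
  (exists M, forall x, Rabs (Derive_n f m x) <= M).

Definition taylor (m : nat) (f : R -> R) (a : R) (x : R) : R :=
  sum_n (fun k => Derive_n f k a / INR (fact k) * (x - a) ^ k) m.

Definition Aq (m : nat) (f g h : R -> R) (a b : R) : R :=
  h b - h a
  - 2 * RInt (fun x => Derive (taylor m f a) x * taylor m g a x
                      - Derive (taylor m g a) x * taylor m f a x) a b
  + 2 * f a * (g b - taylor m g a b)
  - 2 * g a * (f b - taylor m f a b).

Definition Vq (m : nat) (f g : R -> R) (a b : R) : R :=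
  (b - a) ^ (2 * m)
  + (b - a) ^ m * RInt (fun x => Rabs (Derive (taylor m f a) x)
                                 + Rabs (Derive (taylor m g a) x)) a b.

Definition AV_condition (m : nat) (f g h : R -> R) (E : R -> Prop) : Prop :=
  forall eps, 0 < eps -> exists delta, 0 < delta /\
    forall a b, E a -> E b -> 0 < b - a < delta ->
      Rabs (Aq m f g h a b / Vq m f g a b) < eps.

From Stdlib Require Import Reals Lra Lia FunctionalExtensionality ClassicalEpsilon Factorial.
From Coquelicot Require Import Coquelicot.
Open Scope R_scope.

(** Write [F = 2 (f' g - f g')], [G x = \int_0^x F] and [u = h - G]. The quantity [A(a, b)]
    is [u b - u a] with [f], [g] replaced by their Taylor polynomials at [a], up to an
    error [o((b - a)^m)] uniform on [K]; as [V(a, b) = O((b - a)^m)], the A/V condition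
    says that [u] is flat of order [m] on [K]: [u b - u a = o(|b - a|^m)].
    A flat function on a compact set has a [C^m] extension [phi] with [phi = u] and
    [phi' = 0] on [K]: across each gap [(p, q)] of [K] interpolate by
    [u p + (u q - u p) S ((x - p) / (q - p))], where [S t = t^(m+1) / (t^(m+1) + (1 - t)^(m+1))]
    is flat of order [m] at [0] and [1]; flatness of [u] makes the derivatives of order
    [<= m] tend to their values on [K]. Then [chi G + phi] works, where the cutoff [chi],
    a second such extension, is [1] with [chi' = 0] on [K] and vanishes away from [K]. *)

Lemma ex_derive_continuous_R (f : R -> R) x : ex_derive f x -> continuous f x.
Proof. apply (ex_derive_continuous (K := R_AbsRing) (V := R_NormedModule)). Qed.

Lemma ex_RInt_continuous_R (f : R -> R) a b : (forall x, continuous f x) -> ex_RInt f a b.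
Proof. intros Hc. apply (ex_RInt_continuous (V := R_CompleteNormedModule)). intros; apply Hc. Qed.

Lemma continuous_bounded_on (f : R -> R) a b : (forall x, continuous f x) ->
  exists B, 0 <= B /\ forall t, a <= t <= b -> Rabs (f t) <= B.
Proof.
  intros Hc. destruct (Rle_dec a b) as [Hab|Hab]; [|exists 0; split; intros; lra].
  destruct (continuity_ab_maj (fun t => Rabs (f t)) a b Hab) as [M [HM _]].
  - intros c _. apply continuity_pt_filterlim, continuous_Rabs_comp, Hc.
  - exists (Rabs (f M)). split; [apply Rabs_pos|exact HM].
Qed.

Lemma locally_open_interval (P : R -> Prop) a b x : a < x < b ->
  (forall y, a < y < b -> P y) -> locally x P.
Proof.
  intros Hx HP. assert (He : 0 < Rmin (x - a) (b - x)) by (apply Rmin_pos; lra).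
  exists (mkposreal _ He). intros y Hy. apply HP.
  change (Rabs (y - x) < Rmin (x - a) (b - x)) in Hy.
  pose proof (Rmin_l (x - a) (b - x)). pose proof (Rmin_r (x - a) (b - x)).
  apply Rabs_def2 in Hy. lra.
Qed.

Lemma is_derive_0_of_flat (f : R -> R) x :
  (forall eps, 0 < eps -> exists delta, 0 < delta /\
     forall y, Rabs (y - x) < delta -> Rabs (f y - f x) <= eps * Rabs (y - x)) ->
  is_derive f x 0.
Proof.
  intros H. apply is_derive_Reals. intros eps Heps.
  destruct (H (eps / 2) ltac:(lra)) as [d [Hd Hfd]].
  exists (mkposreal d Hd). intros h Hh Hhd. simpl in Hhd.
  specialize (Hfd (x + h)). replace (x + h - x) with h in Hfd by ring.
  specialize (Hfd Hhd). rewrite Rminus_0_r. unfold Rdiv. rewrite Rabs_mult, Rabs_inv.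
  assert (0 < Rabs h) by (apply Rabs_pos_lt; exact Hh).
  apply Rle_lt_trans with (eps / 2 * Rabs h * / Rabs h).
  - apply Rmult_le_compat_r; [left; apply Rinv_0_lt_compat|]; assumption.
  - field_simplify; lra.
Qed.

Lemma continuous_of_eps_delta (f : R -> R) x :
  (forall eps, 0 < eps -> exists delta, 0 < delta /\
     forall y, Rabs (y - x) < delta -> Rabs (f y - f x) <= eps) ->
  continuous f x.
Proof.
  intros H. apply continuity_pt_filterlim. intros eps Heps.
  destruct (H (eps / 2) ltac:(lra)) as [d [Hd Hfd]]. exists d. split; [exact Hd|].
  intros y [_ Hy]. simpl in *. unfold R_dist in *. specialize (Hfd y Hy). lra.
Qed.

Lemma is_derive_primitive (F : R -> R) x : (forall y, continuous F y) ->
  is_derive (fun x => RInt F 0 x) x (F x).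
Proof.
  intros Hc.
  apply (is_derive_RInt (V := R_CompleteNormedModule) F (fun x => RInt F 0 x) 0 x); [|apply Hc].
  apply filter_forall. intros y. apply (RInt_correct (V := R_CompleteNormedModule)).
  apply ex_RInt_continuous_R, Hc.
Qed.

Lemma pow_le_pow_le1 r a b : 0 <= r <= 1 -> (a <= b)%nat -> r ^ b <= r ^ a.
Proof.
  intros Hr Hab. replace b with (a + (b - a))%nat by lia. rewrite pow_add.
  rewrite <- (Rmult_1_r (r ^ a)) at 2. apply Rmult_le_compat_l; [apply pow_le; lra|].
  rewrite <- (pow1 (b - a)). apply pow_incr. exact Hr.
Qed.

Lemma pow_lt_compat x y n : 0 <= x < y -> (1 <= n)%nat -> x ^ n < y ^ n.
Proof.
  intros Hxy Hn. destruct n as [|n]; [lia|]. simpl.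
  pose proof (pow_incr x y n ltac:(lra)). pose proof (pow_le x n ltac:(lra)).
  pose proof (pow_lt y n ltac:(lra)). nra.
Qed.

Lemma pow_add_pos a b n : (1 <= n)%nat -> 0 < b -> - b < a -> 0 < a ^ n + b ^ n.
Proof.
  intros Hn Hb Hab. pose proof (pow_lt b n Hb).
  destruct (Rle_dec 0 a) as [Ha|Ha]; [pose proof (pow_le a n Ha); lra|].
  pose proof (pow_lt_compat (- a) b n ltac:(lra) Hn).
  pose proof (Rle_abs (- a ^ n)). rewrite Rabs_Ropp, <- RPow_abs, Rabs_left in * by lra.
  lra.
Qed.

Lemma Rabs_mult_div_pow D s X L j : 0 < L -> Rabs s <= X ->
  Rabs (D * s / L ^ j) <= Rabs D * X / L ^ j.
Proof.
  intros HL Hs. unfold Rdiv. rewrite !Rabs_mult, Rabs_inv, <- RPow_abs, (Rabs_right L) by lra.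
  apply Rmult_le_compat_r; [left; apply Rinv_0_lt_compat, pow_lt; lra|].
  apply Rmult_le_compat_l; [apply Rabs_pos|exact Hs].
Qed.

Definition Ck (k : nat) (f : R -> R) : Prop :=
  (forall j x, (j <= k)%nat -> ex_derive_n f j x) /\
  (forall x, continuous (Derive_n f k) x).

Definition smooth (f : R -> R) : Prop := forall k, Ck k f.

Lemma Derive_n_Derive f j : Derive_n (Derive f) j = Derive_n f (S j).
Proof.
  apply functional_extensionality; intros x.
  rewrite (Derive_n_comp f j 1). f_equal. lia.
Qed.

Lemma Ck_S k f : Ck (S k) f <-> (forall x, ex_derive f x) /\ Ck k (Derive f).
Proof.
  unfold Ck. rewrite Derive_n_Derive. split.
  - intros [Hd Hc]. split; [intros x; exact (Hd 1%nat x ltac:(lia))|split; [|exact Hc]].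
    intros [|j] x Hj; [exact I|]. simpl. rewrite Derive_n_Derive. apply (Hd (S (S j))). lia.
  - intros [Hd1 [Hd Hc]]. split; [|exact Hc].
    intros [|[|j]] x Hj; [exact I|apply Hd1|].
    specialize (Hd (S j) x ltac:(lia)). simpl in *. rewrite Derive_n_Derive in Hd. exact Hd.
Qed.

Lemma Ck_ext k f g : (forall x, f x = g x) -> Ck k f -> Ck k g.
Proof. intros H. replace g with f; [auto|]. apply functional_extensionality, H. Qed.

Lemma Ck_continuous k f : Ck k f -> forall x, continuous f x.
Proof.
  intros [Hd Hc] x. destruct k as [|k]; [apply Hc|].
  apply ex_derive_continuous_R. apply (Hd 1%nat). lia.
Qed.

Lemma Ck_0_continuous (f : R -> R) : (forall x, continuous f x) -> Ck 0 f.
Proof. intros Hc. split; [intros [|j] x Hj; [exact I|lia]|exact Hc]. Qed.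

Lemma Ck_le k k' f : (k' <= k)%nat -> Ck k f -> Ck k' f.
Proof.
  induction 1 as [|k Hk IH]; [auto|]. intros [Hd Hc]. apply IH. split.
  - intros j x Hj. apply Hd. lia.
  - intros x. apply ex_derive_continuous_R. apply (Hd (S k)). lia.
Qed.

Lemma smooth_Derive_n f j : smooth f -> smooth (Derive_n f j).
Proof.
  induction j as [|j IH]; intros Hf k; [exact (Hf k)|].
  exact (proj2 (proj1 (Ck_S k _) (IH Hf (S k)))).
Qed.

Lemma smooth_ex_derive f : smooth f -> forall x, ex_derive f x.
Proof. intros Hf. exact (proj1 (proj1 (Ck_S 0 f) (Hf 1%nat))). Qed.

Lemma Ck_const k c : Ck k (fun _ => c).
Proof.
  split; [intros; apply ex_derive_n_const|].
  intros x. destruct k; [apply continuous_const|].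
  apply continuous_ext with (fun _ => 0); [intros; now rewrite Derive_n_const|].
  apply continuous_const.
Qed.

Lemma Ck_id k : Ck k (fun x => x).
Proof.
  destruct k as [|k].
  - split; [intros [|j] x Hj; [exact I|lia]|intros x; apply continuous_id].
  - apply Ck_S. split; [intros; apply ex_derive_id|].
    apply Ck_ext with (fun _ => 1); [intros; now rewrite Derive_id|apply Ck_const].
Qed.

Lemma Ck_plus k f g : Ck k f -> Ck k g -> Ck k (fun x => f x + g x).
Proof.
  revert f g. induction k as [|k IH]; intros f g Hf Hg.
  - split; [intros [|j] x Hj; [exact I|lia]|].
    intros x. apply (continuous_plus f g); [apply Hf|apply Hg].
  - apply Ck_S in Hf as [Hf1 Hf2]. apply Ck_S in Hg as [Hg1 Hg2].
    apply Ck_S. split; [intros x; apply (ex_derive_plus f g); auto|].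
    apply Ck_ext with (fun x => Derive f x + Derive g x); [|auto].
    intros x. rewrite Derive_plus; auto.
Qed.

Lemma Ck_scal k c f : Ck k f -> Ck k (fun x => c * f x).
Proof.
  revert f. induction k as [|k IH]; intros f Hf.
  - split; [intros [|j] x Hj; [exact I|lia]|].
    intros x. apply (continuous_mult (fun _ => c) f); [apply continuous_const|apply Hf].
  - apply Ck_S in Hf as [Hf1 Hf2].
    apply Ck_S. split; [intros x; apply (ex_derive_scal f); auto|].
    apply Ck_ext with (fun x => c * Derive f x); [|auto].
    intros x. rewrite Derive_scal; auto.
Qed.

Lemma Ck_minus k f g : Ck k f -> Ck k g -> Ck k (fun x => f x - g x).
Proof.
  intros Hf Hg. apply Ck_ext with (fun x => f x + -1 * g x); [intros; ring|].
  apply Ck_plus; [|apply Ck_scal]; auto.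
Qed.

Lemma Ck_mult k f g : Ck k f -> Ck k g -> Ck k (fun x => f x * g x).
Proof.
  revert f g. induction k as [|k IH]; intros f g Hf Hg.
  - split; [intros [|j] x Hj; [exact I|lia]|].
    intros x. apply (continuous_mult f g); [apply Hf|apply Hg].
  - pose proof (Ck_le _ _ _ (Nat.le_succ_diag_r k) Hf) as Hf0.
    pose proof (Ck_le _ _ _ (Nat.le_succ_diag_r k) Hg) as Hg0.
    apply Ck_S in Hf as [Hf1 Hf2]. apply Ck_S in Hg as [Hg1 Hg2].
    apply Ck_S. split; [intros x; apply (ex_derive_mult f g); auto|].
    apply Ck_ext with (fun x => Derive f x * g x + f x * Derive g x).
    + intros x. rewrite Derive_mult; auto.
    + apply Ck_plus; apply IH; auto.
Qed.

Lemma Ck_pow k f n : Ck k f -> Ck k (fun x => f x ^ n).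
Proof.
  intros Hf. induction n as [|n IH]; [exact (Ck_const k 1)|].
  apply Ck_mult; auto.
Qed.

Lemma Ck_inv k f : Ck k f -> (forall x, f x <> 0) -> Ck k (fun x => / f x).
Proof.
  revert f. induction k as [|k IH]; intros f Hf Hnz.
  - split; [intros [|j] x Hj; [exact I|lia]|].
    intros x. apply (continuous_comp f Rinv); [apply Hf|].
    apply continuity_pt_filterlim, continuity_pt_inv; [apply continuity_pt_id|apply Hnz].
  - pose proof (Ck_le _ _ _ (Nat.le_succ_diag_r k) Hf) as Hf0.
    apply Ck_S in Hf as [Hf1 Hf2].
    apply Ck_S. split; [intros x; apply (ex_derive_inv f); auto|].
    apply Ck_ext with (fun x => -1 * Derive f x * (/ f x * / f x)).
    + intros x. rewrite Derive_inv; auto. field. auto.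
    + apply Ck_mult; [apply Ck_scal; auto|apply Ck_mult; apply IH; auto].
Qed.

Lemma Ck_RInt k (F : R -> R) : Ck k F -> Ck (S k) (fun x => RInt F 0 x).
Proof.
  intros HF. pose proof (is_derive_primitive F) as HD.
  apply Ck_S. split; [intros x; eexists; apply HD, (Ck_continuous k), HF|].
  apply Ck_ext with F; [|exact HF].
  intros x. symmetry. apply is_derive_unique, HD, (Ck_continuous k), HF.
Qed.

Lemma Derive_n_root_mult n (r : R -> R) c j : smooth r -> (j < n)%nat ->
  Derive_n (fun t => (t - c) ^ n * r t) j c = 0.
Proof.
  revert n r. induction j as [|j IH]; intros n r Hr Hj.
  - simpl. rewrite Rminus_diag, pow_i by lia. ring.
  - destruct n as [|n]; [lia|].
    rewrite <- Derive_n_Derive.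
    rewrite (Derive_n_ext _ (fun t => (t - c) ^ n * (INR (S n) * r t + (t - c) * Derive r t))).
    + apply IH; [|lia]. intros k.
      apply Ck_plus; [apply Ck_scal, Hr|].
      apply Ck_mult; [apply Ck_minus; [apply Ck_id|apply Ck_const]|apply (smooth_Derive_n r 1), Hr].
    + intros t. apply is_derive_unique. auto_derive; [apply smooth_ex_derive, Hr|].
      change (Derive (fun x => r x) t) with (Derive r t). destruct n as [|n]; [lia|].
      cbn -[INR pow]. rewrite !S_INR. unfold Rminus. ring.
Qed.

Lemma Rabs_le_of_flat_Derive_n n (F : R -> R) B c t : smooth F ->
  (forall i, (1 <= i <= n)%nat -> Derive_n F i c = 0) ->
  (forall z, Rmin c t <= z <= Rmax c t -> Rabs (Derive_n F (S n) z) <= B) ->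
  Rabs (F t - F c) <= B * Rabs (t - c) ^ S n.
Proof.
  revert F t. induction n as [|n IH]; intros F t HF Hflat HB;
    (destruct (MVT_gen F c t (Derive F)) as [z [Hz ->]];
     [intros; apply Derive_correct, smooth_ex_derive, HF
     |intros; apply continuity_pt_filterlim, ex_derive_continuous_R, smooth_ex_derive, HF|]);
    rewrite Rabs_mult.
  - rewrite pow_1. apply Rmult_le_compat_r; [apply Rabs_pos|]. apply HB, Hz.
  - assert (Hzc : Rabs (z - c) <= Rabs (t - c)).
    { revert Hz. unfold Rmin, Rmax. destruct (Rle_dec c t); intros;
      [rewrite !Rabs_right|rewrite !Rabs_left1]; lra. }
    assert (HDz : Rabs (Derive F z) <= B * Rabs (z - c) ^ S n).
    { assert (HFc : Derive F c = 0) by exact (Hflat 1%nat ltac:(lia)).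
      replace (Derive F z) with (Derive F z - Derive F c) by (rewrite HFc; ring).
      apply IH; [apply (smooth_Derive_n F 1), HF| |].
      - intros i Hi. rewrite Derive_n_Derive. apply Hflat. lia.
      - intros w Hw. rewrite Derive_n_Derive. apply HB.
        revert Hz Hw. unfold Rmin, Rmax.
        destruct (Rle_dec c t), (Rle_dec c z); intros; lra. }
    assert (HB0 : 0 <= B) by (eapply Rle_trans; [apply Rabs_pos|apply HB, Hz]).
    change (Rabs (t - c) ^ S (S n)) with (Rabs (t - c) * Rabs (t - c) ^ S n).
    apply Rle_trans with (B * Rabs (t - c) ^ S n * Rabs (t - c)).
    + apply Rmult_le_compat_r; [apply Rabs_pos|].
      eapply Rle_trans; [exact HDz|]. apply Rmult_le_compat_l; [exact HB0|].
      apply pow_incr. split; [apply Rabs_pos|exact Hzc].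
    + right. ring.
Qed.

(* [dconst j c] is the [j]-th derivative of the constant function [c]. *)
Definition dconst (j : nat) (c : R) : R := match j with O => c | S _ => 0 end.

Lemma Rabs_dconst_sub j a b : Rabs (dconst j a - dconst j b) <= Rabs (a - b).
Proof. destruct j; simpl; [lra|rewrite Rminus_diag, Rabs_R0; apply Rabs_pos]. Qed.

Definition smoothstep (n : nat) (t : R) : R := t ^ n / (t ^ n + (1 - t) ^ n).

Section Smoothstep.

Variable n : nat.
Hypothesis Hn : (1 <= n)%nat.

Lemma smoothstep_denom_pos t : 0 < t ^ n + (1 - t) ^ n.
Proof.
  destruct (Rle_dec t (1 / 2)).
  - apply pow_add_pos; auto; lra.
  - rewrite Rplus_comm. apply pow_add_pos; auto; lra.
Qed.

Lemma smooth_smoothstep_denom_inv : smooth (fun t => / (t ^ n + (1 - t) ^ n)).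
Proof.
  intros k. apply Ck_inv; [|intros t; pose proof (smoothstep_denom_pos t); lra].
  apply Ck_plus; apply Ck_pow; [apply Ck_id|apply Ck_minus; [apply Ck_const|apply Ck_id]].
Qed.

Lemma smooth_smoothstep : smooth (smoothstep n).
Proof.
  intros k. apply Ck_mult; [apply Ck_pow, Ck_id|apply smooth_smoothstep_denom_inv].
Qed.

Lemma smoothstep_flat_0 j : (j < n)%nat -> Derive_n (smoothstep n) j 0 = 0.
Proof.
  intros Hj.
  rewrite (Derive_n_ext _ (fun t => (t - 0) ^ n * / (t ^ n + (1 - t) ^ n)))
    by (intros; unfold smoothstep; rewrite Rminus_0_r; reflexivity).
  apply Derive_n_root_mult; [apply smooth_smoothstep_denom_inv|exact Hj].
Qed.

Lemma smoothstep_flat_1 j : (j < n)%nat -> Derive_n (smoothstep n) j 1 = dconst j 1.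
Proof.
  intros Hj. destruct j as [|j].
  - simpl. unfold smoothstep. rewrite pow1, Rminus_diag, pow_i by lia. field.
  - set (r := fun t => - (-1) ^ n * / (t ^ n + (1 - t) ^ n)).
    assert (Hr : smooth r) by (intros k; apply Ck_scal, smooth_smoothstep_denom_inv).
    assert (Hroot : smooth (fun t => (t - 1) ^ n * r t)).
    { intros k. apply Ck_mult; [apply Ck_pow, Ck_minus; [apply Ck_id|apply Ck_const]|apply Hr]. }
    rewrite (Derive_n_ext _ (fun t => 1 + (t - 1) ^ n * r t)).
    + rewrite Derive_n_plus;
        [|apply filter_forall; intros y k _; apply ex_derive_n_const
         |apply filter_forall; intros y k _; exact (proj1 (Hroot k) k y (le_n k))].
      rewrite Derive_n_const, Derive_n_root_mult by auto. simpl. ring.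
    + intros t. pose proof (smoothstep_denom_pos t). unfold smoothstep, r.
      replace ((1 - t) ^ n) with ((-1) ^ n * (t - 1) ^ n)
        by (rewrite <- Rpow_mult_distr; f_equal; ring).
      field. rewrite <- Rpow_mult_distr. replace (-1 * (t - 1)) with (1 - t) by ring. lra.
Qed.

End Smoothstep.

Lemma smoothstep_bounds m : exists B, 0 <= B /\ forall j t, (j <= m)%nat -> 0 <= t <= 1 ->
  Rabs (Derive_n (smoothstep (S m)) j t) <= B * t ^ S (m - j) /\
  Rabs (Derive_n (smoothstep (S m)) j t - dconst j 1) <= B * (1 - t) ^ S (m - j).
Proof.
  pose proof (smooth_smoothstep (S m) ltac:(lia)) as HS.
  destruct (continuous_bounded_on (Derive_n (smoothstep (S m)) (S m)) 0 1) as [B [HB0 HB]];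
    [apply HS|].
  exists B. split; [exact HB0|]. intros j t Hj Ht.
  assert (Htop : forall c z, Rmin c t <= z <= Rmax c t -> 0 <= c <= 1 ->
    Rabs (Derive_n (Derive_n (smoothstep (S m)) j) (S (m - j)) z) <= B).
  { intros c z Hz Hc. rewrite Derive_n_comp. replace (S (m - j) + j)%nat with (S m) by lia.
    apply HB. revert Hz. unfold Rmin, Rmax. destruct (Rle_dec c t); lra. }
  split.
  - rewrite <- (Rminus_0_r (Derive_n _ j t)), <- (smoothstep_flat_0 (S m) ltac:(lia) j) by lia.
    rewrite <- (Rabs_right t) at 2 by lra. rewrite <- (Rminus_0_r t) at 2.
    apply Rabs_le_of_flat_Derive_n; [apply smooth_Derive_n, HS| |intros; apply (Htop 0); lra].
    intros i Hi. rewrite Derive_n_comp. apply smoothstep_flat_0; lia.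
  - rewrite <- (smoothstep_flat_1 (S m) ltac:(lia) j) by lia.
    replace (1 - t) with (Rabs (t - 1)) by (rewrite Rabs_left1; lra).
    apply Rabs_le_of_flat_Derive_n; [apply smooth_Derive_n, HS| |intros; apply (Htop 1); lra].
    intros i Hi. rewrite Derive_n_comp, smoothstep_flat_1 by lia.
    destruct (i + j)%nat eqn:E; [lia|reflexivity].
Qed.

(** * Gaps of a closed set *)

Definition gap_left (K : R -> Prop) (x : R) : R := real (Lub_Rbar (fun k => K k /\ k <= x)).

Definition gap_right (K : R -> Prop) (x : R) : R := - gap_left (fun k => K (- k)) (- x).

Lemma gap_left_spec K x : closed_set K -> (exists k, K k /\ k <= x) ->
  K (gap_left K x) /\ gap_left K x <= x /\ forall k, K k -> k <= x -> k <= gap_left K x.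
Proof.
  intros HK Hne.
  destruct (completeness (fun k => K k /\ k <= x)) as [l [Hub Hlub]];
    [exists x; intros k [_ Hk]; exact Hk|destruct Hne as [k Hk]; exists k; exact Hk|].
  assert (Hlx : l <= x) by (apply Hlub; intros k [_ Hk]; exact Hk).
  assert (HKl : K l).
  { destruct (classic (K l)) as [Hin|Hout]; [exact Hin|exfalso].
    destruct (HK l Hout) as [d Hd].
    assert (l <= l - d); [|pose proof (cond_pos d); lra].
    apply Hlub. intros k [Hk Hkx]. destruct (Rle_dec k (l - d)) as [|Hkd]; [assumption|].
    exfalso. apply (Hd k); [|exact Hk].
    assert (k <= l) by (apply Hub; split; assumption).
    unfold disc. rewrite Rabs_left1; lra. }
  assert (Hl : gap_left K x = l).
  { unfold gap_left. rewrite (is_lub_Rbar_unique _ (Finite l)); [reflexivity|].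
    split; [intros k Hk; apply Hub, Hk|intros b Hb; apply Hb; split; assumption]. }
  rewrite Hl. split; [exact HKl|split; [exact Hlx|]].
  intros k Hk Hkx. apply Hub. split; assumption.
Qed.

Lemma closed_set_opp K : closed_set K -> closed_set (fun k => K (- k)).
Proof.
  intros HK x Hx. destruct (HK (- x) Hx) as [d Hd]. exists d. intros y Hy.
  apply Hd. unfold disc in *. rewrite <- Rabs_Ropp. replace (- (- y - - x)) with (y - x) by ring.
  exact Hy.
Qed.

Lemma gap_right_spec K x : closed_set K -> (exists k, K k /\ x <= k) ->
  K (gap_right K x) /\ x <= gap_right K x /\ forall k, K k -> x <= k -> gap_right K x <= k.
Proof.
  intros HK [k0 Hk0]. unfold gap_right.
  destruct (gap_left_spec (fun k => K (- k)) (- x)) as (HK' & Hx & Hmax).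
  - apply closed_set_opp, HK.
  - exists (- k0). rewrite Ropp_involutive. split; [apply Hk0|lra].
  - split; [exact HK'|split; [lra|]].
    intros k Hk Hxk. assert (- k <= gap_left (fun k => K (- k)) (- x)); [|lra].
    apply Hmax; [rewrite Ropp_involutive; exact Hk|lra].
Qed.

Lemma gap_spec K x : closed_set K -> ~ K x ->
  (exists k, K k /\ k <= x) -> (exists k, K k /\ x <= k) ->
  let p := gap_left K x in let q := gap_right K x in
  K p /\ K q /\ p < x < q /\ (forall y, p < y < q -> ~ K y) /\
  (forall y, p < y < q -> gap_left K y = p /\ gap_right K y = q).
Proof.
  intros HK Hx Hl Hr p q.
  destruct (gap_left_spec K x HK Hl) as (Hp & Hpx & Hpmax).
  destruct (gap_right_spec K x HK Hr) as (Hq & Hqx & Hqmin).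
  fold p in Hp, Hpx, Hpmax. fold q in Hq, Hqx, Hqmin.
  assert (Hpx' : p < x) by (destruct Hpx as [|E]; [assumption|rewrite E in Hp; contradiction]).
  assert (Hqx' : x < q) by (destruct Hqx as [|E]; [assumption|rewrite <- E in Hq; contradiction]).
  assert (Hgap : forall y, p < y < q -> ~ K y).
  { intros y Hy Hky. destruct (Rle_dec y x).
    - pose proof (Hpmax y Hky r). lra.
    - pose proof (Hqmin y Hky ltac:(lra)). lra. }
  do 4 (split; [auto|]).
  intros y Hy.
  assert (HKout : forall k, K k -> k <= p \/ q <= k).
  { intros k Hk. destruct (Rle_dec k p); [left; assumption|].
    destruct (Rle_dec q k); [right; assumption|]. exfalso. apply (Hgap k); [lra|exact Hk]. }
  destruct (gap_left_spec K y HK) as (Hp' & Hpy & Hpmax'); [exists p; split; [exact Hp|lra]|].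
  destruct (gap_right_spec K y HK) as (Hq' & Hqy & Hqmin'); [exists q; split; [exact Hq|lra]|].
  split; apply Rle_antisym.
  - destruct (HKout _ Hp'); lra.
  - apply Hpmax'; [exact Hp|lra].
  - apply Hqmin'; [exact Hq|lra].
  - destruct (HKout _ Hq'); lra.
Qed.

Lemma closed_set_add_point K a : closed_set K -> closed_set (fun x => K x \/ x = a).
Proof.
  intros HK x Hx. destruct (HK x (fun H => Hx (or_introl H))) as [d Hd].
  assert (Hxa : 0 < Rabs (x - a)) by (apply Rabs_pos_lt; intros E; apply Hx; right; lra).
  assert (He : 0 < Rmin d (Rabs (x - a))) by (apply Rmin_pos; [apply cond_pos|exact Hxa]).
  exists (mkposreal _ He). intros y Hy [HKy|Hya].
  - apply (Hd y); [|exact HKy]. unfold disc in *. simpl in Hy.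
    pose proof (Rmin_l d (Rabs (x - a))). lra.
  - subst y. unfold disc in Hy. simpl in Hy. rewrite Rabs_minus_sym in Hy.
    pose proof (Rmin_r d (Rabs (x - a))). lra.
Qed.

Lemma compact_attains_bounds K x0 : compact K -> K x0 ->
  exists al be, K al /\ K be /\ forall x, K x -> al <= x <= be.
Proof.
  intros HK Hx0. destruct (compact_P1 K HK) as [lo [hi Hlh]].
  pose proof (compact_P2 K HK) as Hcl.
  destruct (gap_right_spec K lo Hcl) as (Hal & _ & Hmin);
    [exists x0; split; [exact Hx0|apply Hlh, Hx0]|].
  destruct (gap_left_spec K hi Hcl) as (Hbe & _ & Hmax);
    [exists x0; split; [exact Hx0|apply Hlh, Hx0]|].
  exists (gap_right K lo), (gap_left K hi). split; [exact Hal|split; [exact Hbe|]].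
  intros x Hx. pose proof (Hlh x Hx). split; [apply Hmin|apply Hmax]; auto; lra.
Qed.

(** * Whitney extension of flat functions *)

Definition flat_on (m : nat) (K : R -> Prop) (u : R -> R) : Prop :=
  forall eps, 0 < eps -> exists delta, 0 < delta /\
    forall a b, K a -> K b -> Rabs (b - a) < delta ->
      Rabs (u b - u a) <= eps * Rabs (b - a) ^ m.

Lemma flat_on_of_forward m K (u : R -> R) :
  (forall eps, 0 < eps -> exists delta, 0 < delta /\ forall a b, K a -> K b ->
     0 < b - a < delta -> Rabs (u b - u a) <= eps * (b - a) ^ m) ->
  flat_on m K u.
Proof.
  intros H eps Heps. destruct (H eps Heps) as [d [Hd Hu]]. exists d. split; [exact Hd|].
  intros a b Ha Hb Hab. destruct (Rtotal_order a b) as [Hlt|[<-|Hgt]].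
  - rewrite (Rabs_right (b - a)) in * by lra. apply Hu; auto; lra.
  - rewrite !Rminus_diag, Rabs_R0.
    apply Rmult_le_pos; [lra|apply pow_le; lra].
  - rewrite Rabs_minus_sym, (Rabs_minus_sym b a), (Rabs_right (a - b)) in * by lra.
    apply Hu; auto; lra.
Qed.

(* Short gaps ([L < d1]) are controlled by the flatness of the data, long ones by the
   bound [M] on the jump [D]. *)
Lemma gap_term_bound m j D L d B e1 d1 M : (j <= m)%nat ->
  0 < d1 -> 0 < L -> 0 <= d <= L -> 0 <= B -> 0 <= e1 ->
  (L < d1 -> Rabs D <= e1 * L ^ m) -> Rabs D <= M ->
  Rabs D * (B * (d / L) ^ S (m - j)) / L ^ j
    <= e1 * B * d ^ (m - j) + M * B / d1 ^ S m * d ^ S (m - j).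
Proof.
  intros Hj Hd1 HL Hd HB He1 Hsmall Hlarge.
  assert (HLm : 0 < L ^ m) by (apply pow_lt; lra).
  assert (Hdk : 0 <= d ^ (m - j)) by (apply pow_le; lra).
  assert (Hd1m : 0 < d1 ^ S m) by (apply pow_lt; lra).
  assert (HM : 0 <= M) by (eapply Rle_trans; [apply Rabs_pos|exact Hlarge]).
  assert (E : Rabs D * (B * (d / L) ^ S (m - j)) / L ^ j
              = Rabs D * B * d ^ S (m - j) / (L * L ^ m)).
  { replace (L * L ^ m) with (L ^ S (m - j) * L ^ j)
      by (rewrite <- pow_add; replace (S (m - j) + j)%nat with (S m) by lia; reflexivity).
    unfold Rdiv. rewrite Rpow_mult_distr, pow_inv. field.
    split; apply pow_nonzero; lra. }
  rewrite E.
  assert (Hterm1 : 0 <= e1 * B * d ^ (m - j)) by (apply Rmult_le_pos; [apply Rmult_le_pos|]; lra).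
  assert (Hterm2 : 0 <= M * B / d1 ^ S m * d ^ S (m - j)).
  { apply Rmult_le_pos; [apply Rdiv_le_0_compat; [apply Rmult_le_pos|]; lra|apply pow_le; lra]. }
  destruct (Rlt_dec L d1) as [HLs|HLl].
  - specialize (Hsmall HLs).
    apply Rle_trans with (e1 * B * d ^ (m - j)); [|lra].
    apply Rle_trans with (e1 * L ^ m * B * d ^ S (m - j) / (L * L ^ m)).
    + apply Rmult_le_compat_r; [left; apply Rinv_0_lt_compat; nra|].
      apply Rmult_le_compat_r; [apply pow_le; lra|].
      apply Rmult_le_compat_r; lra.
    + simpl pow. replace (e1 * L ^ m * B * (d * d ^ (m - j)) / (L * L ^ m))
        with (e1 * B * d ^ (m - j) * (d / L)) by (field; lra).
      rewrite <- (Rmult_1_r (e1 * B * d ^ (m - j))) at 2.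
      apply Rmult_le_compat_l; [exact Hterm1|].
      apply Rmult_le_reg_r with L; [exact HL|]. unfold Rdiv. rewrite Rmult_assoc, Rinv_l; lra.
  - apply Rle_trans with (M * B / d1 ^ S m * d ^ S (m - j)); [|lra].
    assert (Hd1L : d1 ^ S m <= L * L ^ m)
      by (change (L * L ^ m) with (L ^ S m); apply pow_incr; lra).
    replace (M * B / d1 ^ S m * d ^ S (m - j)) with (M * B * d ^ S (m - j) / d1 ^ S m)
      by (field; lra).
    apply Rle_trans with (M * B * d ^ S (m - j) / (L * L ^ m)).
    + apply Rmult_le_compat_r; [left; apply Rinv_0_lt_compat; nra|].
      apply Rmult_le_compat_r; [apply pow_le; lra|].
      apply Rmult_le_compat_r; lra.
    + apply Rmult_le_compat_l; [apply Rmult_le_pos; [apply Rmult_le_pos|apply pow_le]; lra|].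
      apply Rinv_le_contravar; assumption.
Qed.

Section Whitney.

Variables (m : nat) (K : R -> Prop) (u : R -> R) (al be Bu B : R).
Hypotheses (Hm : (1 <= m)%nat) (HK : closed_set K) (Hal : K al) (Hbe : K be)
  (Hbd : forall x, K x -> al <= x <= be)
  (Hflat : flat_on m K u) (HBu : forall x, K x -> Rabs (u x) <= Bu).
Hypotheses (HB0 : 0 <= B) (HB : forall j t, (j <= m)%nat -> 0 <= t <= 1 ->
  Rabs (Derive_n (smoothstep (S m)) j t) <= B * t ^ S (m - j) /\
  Rabs (Derive_n (smoothstep (S m)) j t - dconst j 1) <= B * (1 - t) ^ S (m - j)).

Definition gap_interp (p q : R) (j : nat) (x : R) : R :=
  dconst j (u p) + (u q - u p) * Derive_n (smoothstep (S m)) j ((x - p) / (q - p)) / (q - p) ^ j.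

(* The candidate [j]-th derivative of the extension: the jet [(u, 0, ..., 0)] on [K],
   constants outside [[al, be]], and the [j]-th derivative of the rescaled step on each
   gap [(p, q)] of [K]. *)
Definition whitney_jet (j : nat) (x : R) : R :=
  if excluded_middle_informative (K x) then dconst j (u x)
  else if Rlt_dec x al then dconst j (u al)
  else if Rlt_dec be x then dconst j (u be)
  else gap_interp (gap_left K x) (gap_right K x) j x.

Lemma whitney_jet_in j x : K x -> whitney_jet j x = dconst j (u x).
Proof. intros Hx. unfold whitney_jet. destruct (excluded_middle_informative (K x)); tauto. Qed.

Lemma whitney_jet_lt j x : x < al -> whitney_jet j x = dconst j (u al).
Proof.
  intros Hx. unfold whitney_jet. destruct (excluded_middle_informative (K x)) as [Hk|_].
  - apply Hbd in Hk. lra.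
  - destruct (Rlt_dec x al); [reflexivity|lra].
Qed.

Lemma whitney_jet_gt j x : be < x -> whitney_jet j x = dconst j (u be).
Proof.
  intros Hx. pose proof (Hbd al Hal). unfold whitney_jet.
  destruct (excluded_middle_informative (K x)) as [Hk|_]; [apply Hbd in Hk; lra|].
  destruct (Rlt_dec x al); [lra|]. destruct (Rlt_dec be x); [reflexivity|lra].
Qed.

Lemma whitney_gap x : ~ K x -> al <= x <= be ->
  let p := gap_left K x in let q := gap_right K x in
  K p /\ K q /\ al <= p < x /\ x < q <= be /\ (forall y, p < y < q -> ~ K y) /\
  forall j y, p < y < q -> whitney_jet j y = gap_interp p q j y.
Proof.
  intros Hx Hxab p q. subst p q.
  destruct (gap_spec K x HK Hx) as (Hp & Hq & [Hpx Hxq] & Hgap & Hgap2);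
    [exists al; split; [exact Hal|lra]|exists be; split; [exact Hbe|lra]|].
  pose proof (Hbd _ Hp). pose proof (Hbd _ Hq).
  do 4 (split; [auto; lra|]). split; [exact Hgap|].
  intros j y Hy. destruct (Hgap2 y Hy) as [Ep Eq]. unfold whitney_jet.
  destruct (excluded_middle_informative (K y)) as [Hk|_]; [exfalso; exact (Hgap y Hy Hk)|].
  destruct (Rlt_dec y al); [lra|]. destruct (Rlt_dec be y); [lra|].
  rewrite Ep, Eq. reflexivity.
Qed.

Lemma is_derive_gap_interp p q j x : p < q ->
  is_derive (gap_interp p q j) x (gap_interp p q (S j) x).
Proof.
  intros Hpq. unfold gap_interp.
  assert (Hex : forall t, ex_derive (Derive_n (smoothstep (S m)) j) t).
  { intros t. apply smooth_ex_derive, smooth_Derive_n, smooth_smoothstep. lia. }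
  auto_derive; [apply Hex|].
  change (Derive (fun x => Derive_n (smoothstep (S m)) j x) ((x + - p) * / (q - p)))
    with (Derive_n (smoothstep (S m)) (S j) ((x - p) / (q - p))).
  simpl. field. split; [apply pow_nonzero|]; lra.
Qed.

Lemma is_derive_whitney_jet_out j x : ~ K x ->
  is_derive (whitney_jet j) x (whitney_jet (S j) x).
Proof.
  intros Hx. destruct (Rlt_dec x al) as [Hxa|Hxa]; [|destruct (Rlt_dec be x) as [Hxb|Hxb]].
  - rewrite whitney_jet_lt by exact Hxa. cbn [dconst].
    apply is_derive_ext_loc with (fun _ => dconst j (u al));
      [|apply (is_derive_const (K := R_AbsRing) (V := R_NormedModule))].
    apply (locally_open_interval _ (x - 1) al); [lra|].
    intros y Hy. symmetry. apply whitney_jet_lt. lra.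
  - rewrite whitney_jet_gt by exact Hxb. cbn [dconst].
    apply is_derive_ext_loc with (fun _ => dconst j (u be));
      [|apply (is_derive_const (K := R_AbsRing) (V := R_NormedModule))].
    apply (locally_open_interval _ be (x + 1)); [lra|].
    intros y Hy. symmetry. apply whitney_jet_gt. lra.
  - destruct (whitney_gap x Hx ltac:(lra)) as (_ & _ & Hp & Hq & _ & Hjet).
    rewrite Hjet by lra.
    apply is_derive_ext_loc with (gap_interp (gap_left K x) (gap_right K x) j);
      [|apply is_derive_gap_interp; lra].
    apply (locally_open_interval _ (gap_left K x) (gap_right K x)); [lra|].
    intros y Hy. symmetry. apply Hjet, Hy.
Qed.

Lemma Bu_nonneg : 0 <= Bu.
Proof. eapply Rle_trans; [apply Rabs_pos|exact (HBu al Hal)]. Qed.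

Definition jet_err (e1 d1 : R) (j : nat) (d : R) : R :=
  e1 * B * d ^ (m - j) + 2 * Bu * B / d1 ^ S m * d ^ S (m - j).

Lemma jet_err_mono e1 d1 j d d' : 0 <= e1 -> 0 < d1 -> 0 <= d <= d' ->
  0 <= jet_err e1 d1 j d <= jet_err e1 d1 j d'.
Proof.
  intros He1 Hd1 Hd. pose proof Bu_nonneg.
  assert (0 <= 2 * Bu * B / d1 ^ S m)
    by (apply Rdiv_le_0_compat; [apply Rmult_le_pos|apply pow_lt]; lra).
  assert (0 <= e1 * B) by (apply Rmult_le_pos; lra).
  pose proof (pow_le d (m - j) ltac:(lra)). pose proof (pow_le d (S (m - j)) ltac:(lra)).
  pose proof (pow_incr d d' (m - j) Hd). pose proof (pow_incr d d' (S (m - j)) Hd).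
  unfold jet_err. split; [|apply Rplus_le_compat; apply Rmult_le_compat_l]; nra.
Qed.

Lemma gap_interp_remainder e1 d1 p q j y : (j <= m)%nat -> 0 <= e1 -> 0 < d1 ->
  (forall a b, K a -> K b -> Rabs (b - a) < d1 -> Rabs (u b - u a) <= e1 * Rabs (b - a) ^ m) ->
  K p -> K q -> p < y < q ->
  Rabs (gap_interp p q j y - dconst j (u p)) <= jet_err e1 d1 j (y - p) /\
  Rabs (gap_interp p q j y - dconst j (u q)) <= jet_err e1 d1 j (q - y).
Proof.
  intros Hj He1 Hd1 Hfl Hp Hq Hy. unfold gap_interp.
  set (L := q - p). set (t := (y - p) / L). set (D := u q - u p).
  assert (HL : 0 < L) by (unfold L; lra).
  assert (Ht : 0 <= t <= 1).
  { unfold t. split; [apply Rdiv_le_0_compat; lra|].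
    apply Rmult_le_reg_r with L; [exact HL|].
    unfold Rdiv. rewrite Rmult_assoc, Rinv_l; unfold L; lra. }
  assert (HDlarge : Rabs D <= 2 * Bu).
  { unfold D, Rminus. eapply Rle_trans; [apply Rabs_triang|]. rewrite Rabs_Ropp.
    pose proof (HBu p Hp). pose proof (HBu q Hq). lra. }
  assert (HDsmall : L < d1 -> Rabs D <= e1 * L ^ m).
  { intros HLd. unfold D, L in *. rewrite <- (Rabs_right (q - p)) by lra.
    apply Hfl; [exact Hp|exact Hq|rewrite Rabs_right; lra]. }
  destruct (HB j t Hj Ht) as [H0 H1].
  split; unfold jet_err.
  - replace (dconst j (u p) + D * Derive_n (smoothstep (S m)) j t / L ^ j - dconst j (u p))
      with (D * Derive_n (smoothstep (S m)) j t / L ^ j) by ring.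
    eapply Rle_trans; [apply Rabs_mult_div_pow; [exact HL|exact H0]|].
    unfold t. apply gap_term_bound; auto; unfold L; lra.
  - replace (dconst j (u p) + D * Derive_n (smoothstep (S m)) j t / L ^ j - dconst j (u q))
      with (D * (Derive_n (smoothstep (S m)) j t - dconst j 1) / L ^ j)
      by (unfold D, Rdiv; destruct j; simpl; rewrite ?Rinv_1; ring).
    replace (1 - t) with ((q - y) / L) in H1 by (unfold t, L; field; lra).
    eapply Rle_trans; [apply Rabs_mult_div_pow; [exact HL|exact H1]|].
    apply gap_term_bound; auto; unfold L; lra.
Qed.

Lemma whitney_jet_near e1 d1 j x y : (j <= m)%nat -> 0 <= e1 -> 0 < d1 ->
  (forall a b, K a -> K b -> Rabs (b - a) < d1 -> Rabs (u b - u a) <= e1 * Rabs (b - a) ^ m) ->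
  K x -> exists e, K e /\ Rabs (e - x) <= Rabs (y - x) /\
    Rabs (whitney_jet j y - dconst j (u e)) <= jet_err e1 d1 j (Rabs (y - x)).
Proof.
  intros Hj He1 Hd1 Hfl Hx. pose proof (Hbd x Hx) as Hxab.
  assert (Herr : forall d, 0 <= d <= Rabs (y - x) ->
    jet_err e1 d1 j d <= jet_err e1 d1 j (Rabs (y - x)))
    by (intros d Hd; apply jet_err_mono; auto).
  assert (Hzero : 0 <= jet_err e1 d1 j (Rabs (y - x)))
    by (apply (jet_err_mono e1 d1 j _ (Rabs (y - x))); auto; split; [apply Rabs_pos|lra]).
  assert (Hexact : forall e, K e -> Rabs (e - x) <= Rabs (y - x) ->
    whitney_jet j y = dconst j (u e) ->
    exists e, K e /\ Rabs (e - x) <= Rabs (y - x) /\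
      Rabs (whitney_jet j y - dconst j (u e)) <= jet_err e1 d1 j (Rabs (y - x))).
  { intros e He Hex E. exists e. rewrite E, Rminus_diag, Rabs_R0. auto. }
  destruct (excluded_middle_informative (K y)) as [Hy|Hy];
    [apply (Hexact y Hy (Rle_refl _)), whitney_jet_in, Hy|].
  destruct (Rlt_dec y al) as [Hya|Hya].
  { apply (Hexact al Hal); [rewrite !Rabs_left1; lra|apply whitney_jet_lt, Hya]. }
  destruct (Rlt_dec be y) as [Hyb|Hyb].
  { apply (Hexact be Hbe); [rewrite !Rabs_right; lra|apply whitney_jet_gt, Hyb]. }
  destruct (whitney_gap y Hy ltac:(lra)) as (Hp & Hq & Hpy & Hyq & Hgap & Hjet).
  set (p := gap_left K y) in *. set (q := gap_right K y) in *.
  rewrite Hjet by lra.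
  destruct (gap_interp_remainder e1 d1 p q j y Hj He1 Hd1 Hfl Hp Hq ltac:(lra)) as [Rp Rq].
  destruct (Rle_dec x p) as [Hxp|Hxp].
  - exists p. split; [exact Hp|split; [rewrite !Rabs_right; lra|]].
    eapply Rle_trans; [exact Rp|]. apply Herr. rewrite Rabs_right; lra.
  - assert (Hqx : q <= x)
      by (destruct (Rle_dec q x); [assumption|exfalso; apply (Hgap x); [lra|exact Hx]]).
    exists q. split; [exact Hq|split; [rewrite !Rabs_left1; lra|]].
    eapply Rle_trans; [exact Rq|]. apply Herr. rewrite Rabs_left1; lra.
Qed.

Lemma whitney_jet_increment e1 d1 j x y : (j <= m)%nat -> 0 <= e1 -> 0 < d1 <= 1 ->
  (forall a b, K a -> K b -> Rabs (b - a) < d1 -> Rabs (u b - u a) <= e1 * Rabs (b - a) ^ m) ->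
  K x -> Rabs (y - x) < d1 ->
  Rabs (whitney_jet j y - whitney_jet j x)
    <= (e1 * (B + 1) + 2 * Bu * B / d1 ^ S m * Rabs (y - x)) * Rabs (y - x) ^ (m - j).
Proof.
  intros Hj He1 Hd1 Hfl Hx Hxy. set (r := Rabs (y - x)) in *.
  assert (Hr : 0 <= r <= 1) by (split; [apply Rabs_pos|lra]).
  destruct (whitney_jet_near e1 d1 j x y Hj He1 (proj1 Hd1) Hfl Hx) as (e & He & Hex & Hnear).
  fold r in Hex, Hnear. rewrite (whitney_jet_in j x Hx).
  assert (Hue : Rabs (dconst j (u e) - dconst j (u x)) <= e1 * r ^ (m - j)).
  { eapply Rle_trans; [apply Rabs_dconst_sub|].
    eapply Rle_trans; [apply Hfl; auto; lra|]. apply Rmult_le_compat_l; [lra|].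
    eapply Rle_trans; [apply pow_incr; split; [apply Rabs_pos|exact Hex]|].
    apply pow_le_pow_le1; [exact Hr|lia]. }
  replace (whitney_jet j y - dconst j (u x))
    with ((whitney_jet j y - dconst j (u e)) + (dconst j (u e) - dconst j (u x))) by ring.
  eapply Rle_trans; [apply Rabs_triang|].
  unfold jet_err in Hnear. change (r ^ S (m - j)) with (r * r ^ (m - j)) in Hnear.
  lra.
Qed.

Lemma whitney_jet_flat j : (j <= m)%nat -> forall eps, 0 < eps -> exists delta, 0 < delta /\
  forall x y, K x -> Rabs (y - x) < delta ->
    Rabs (whitney_jet j y - whitney_jet j x) <= eps * Rabs (y - x) ^ (m - j).
Proof.
  intros Hj eps Heps. pose proof Bu_nonneg.
  set (e1 := eps / (2 * (B + 1))).
  assert (He1 : 0 < e1) by (unfold e1; apply Rdiv_lt_0_compat; lra).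
  destruct (Hflat e1 He1) as [d0 [Hd0 Hfl0]].
  set (d1 := Rmin 1 d0).
  assert (Hd1 : 0 < d1 <= 1 /\ d1 <= d0)
    by (split; [split; [apply Rmin_pos|apply Rmin_l]|apply Rmin_r]; lra).
  set (C := 2 * Bu * B / d1 ^ S m).
  assert (HC : 0 <= C) by (apply Rdiv_le_0_compat; [apply Rmult_le_pos|apply pow_lt]; lra).
  assert (Hd2 : 0 < eps / (2 * (C + 1))) by (apply Rdiv_lt_0_compat; lra).
  exists (Rmin d1 (eps / (2 * (C + 1)))). split; [apply Rmin_pos; lra|].
  intros x y Hx Hxy.
  pose proof (Rmin_l d1 (eps / (2 * (C + 1)))). pose proof (Rmin_r d1 (eps / (2 * (C + 1)))).
  eapply Rle_trans; [apply (whitney_jet_increment e1 d1); try assumption; try lra|].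
  { intros a b Ha Hb Hab. apply Hfl0; auto; lra. }
  apply Rmult_le_compat_r; [apply pow_le, Rabs_pos|]. fold C.
  assert (HCr : C * Rabs (y - x) <= eps / 2).
  { apply Rle_trans with (C * (eps / (2 * (C + 1)))); [apply Rmult_le_compat_l; lra|].
    apply Rmult_le_reg_r with (2 * (C + 1)); [lra|].
    replace (C * (eps / (2 * (C + 1))) * (2 * (C + 1))) with (C * eps) by (field; lra).
    replace (eps / 2 * (2 * (C + 1))) with (C * eps + eps) by field. lra. }
  replace (e1 * (B + 1)) with (eps / 2) by (unfold e1; field; lra). lra.
Qed.

Lemma is_derive_whitney_jet j x : (j < m)%nat ->
  is_derive (whitney_jet j) x (whitney_jet (S j) x).
Proof.
  intros Hj. destruct (excluded_middle_informative (K x)) as [Hx|Hx];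
    [|apply is_derive_whitney_jet_out, Hx].
  rewrite whitney_jet_in by exact Hx. apply is_derive_0_of_flat. intros eps Heps.
  destruct (whitney_jet_flat j ltac:(lia) eps Heps) as [d [Hd Hfl]].
  exists (Rmin d 1). split; [apply Rmin_pos; lra|]. intros y Hy.
  pose proof (Rmin_l d 1). pose proof (Rmin_r d 1).
  eapply Rle_trans; [apply Hfl; [exact Hx|lra]|].
  apply Rmult_le_compat_l; [lra|]. rewrite <- (pow_1 (Rabs (y - x))) at 2.
  apply pow_le_pow_le1; [split; [apply Rabs_pos|lra]|lia].
Qed.

Lemma continuous_whitney_jet_top x : continuous (whitney_jet m) x.
Proof.
  destruct (excluded_middle_informative (K x)) as [Hx|Hx].
  - apply continuous_of_eps_delta. intros eps Heps.
    destruct (whitney_jet_flat m (le_n m) eps Heps) as [d [Hd Hfl]].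
    exists d. split; [exact Hd|]. intros y Hy.
    rewrite <- (Rmult_1_r eps), <- (pow_O (Rabs (y - x))), <- (Nat.sub_diag m).
    apply Hfl; assumption.
  - apply ex_derive_continuous_R. eexists. apply is_derive_whitney_jet_out, Hx.
Qed.

Lemma Derive_n_whitney_jet j : (j <= m)%nat -> Derive_n (whitney_jet 0) j = whitney_jet j.
Proof.
  induction j as [|j IH]; intros Hj; [reflexivity|].
  apply functional_extensionality. intros x. simpl. rewrite IH by lia.
  apply is_derive_unique, is_derive_whitney_jet. lia.
Qed.

Lemma Ck_whitney_jet : Ck m (whitney_jet 0).
Proof.
  split.
  - intros [|j] x Hj; [exact I|]. simpl. rewrite Derive_n_whitney_jet by lia.
    eexists. apply is_derive_whitney_jet. lia.
  - rewrite Derive_n_whitney_jet by lia. apply continuous_whitney_jet_top.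
Qed.

End Whitney.

Theorem whitney_flat_extension m K u al be Bu : (1 <= m)%nat -> closed_set K ->
  K al -> K be -> (forall x, K x -> al <= x <= be) ->
  flat_on m K u -> (forall x, K x -> Rabs (u x) <= Bu) ->
  exists phi, Ck m phi /\ (forall x, K x -> phi x = u x) /\
    (forall x, K x -> Derive phi x = 0) /\
    (forall x, x < al -> phi x = u al) /\ (forall x, be < x -> phi x = u be).
Proof.
  intros Hm HK Hal Hbe Hbd Hflat HBu.
  destruct (smoothstep_bounds m) as [B [HB0 HB]].
  exists (whitney_jet m K u al be 0). split; [|split; [|split; [|split]]].
  - apply (Ck_whitney_jet m K u al be Bu B); assumption.
  - intros x Hx. apply whitney_jet_in, Hx.
  - intros x Hx. change (Derive _ x) with (Derive_n (whitney_jet m K u al be 0) 1 x).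
    rewrite (Derive_n_whitney_jet m K u al be Bu B) by (assumption || lia).
    apply whitney_jet_in, Hx.
  - intros x Hx. apply (whitney_jet_lt m K u al be); assumption.
  - intros x Hx. apply (whitney_jet_gt m K u al be); assumption.
Qed.

Lemma smooth_cutoff m K al be : (1 <= m)%nat -> closed_set K -> K al -> K be ->
  (forall x, K x -> al <= x <= be) ->
  exists chi, Ck m chi /\ (forall x, K x -> chi x = 1) /\ (forall x, K x -> Derive chi x = 0) /\
    (forall x, x < al - 1 \/ be + 1 < x -> chi x = 0).
Proof.
  intros Hm HK Hal Hbe Hbd. pose proof (Hbd al Hal).
  (* Extend the indicator of [[al, be]] from [K] and the two points [al - 1], [be + 1]. *)
  set (K' := fun x => (K x \/ x = al - 1) \/ x = be + 1).
  set (ind := fun x => if Rlt_dec x al then 0 else if Rlt_dec be x then 0 else 1).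
  assert (Hind : forall x, K x -> ind x = 1).
  { intros x Hx. apply Hbd in Hx. unfold ind.
    destruct (Rlt_dec x al); [lra|]. destruct (Rlt_dec be x); [lra|reflexivity]. }
  assert (Hlo : ind (al - 1) = 0)
    by (unfold ind; destruct (Rlt_dec (al - 1) al); [reflexivity|lra]).
  assert (Hhi : ind (be + 1) = 0).
  { unfold ind. destruct (Rlt_dec (be + 1) al); [reflexivity|].
    destruct (Rlt_dec be (be + 1)); [reflexivity|lra]. }
  assert (Hlocal : forall a b, K' a -> K' b -> Rabs (b - a) < 1 -> ind b = ind a).
  { intros a b Ha Hb Hab. apply Rabs_def2 in Hab.
    destruct Ha as [[Ha| ->]| ->]; destruct Hb as [[Hb| ->]| ->];
      first [reflexivity | rewrite !Hind by assumption; reflexivity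
            | exfalso; try (apply Hbd in Ha); try (apply Hbd in Hb); lra]. }
  destruct (whitney_flat_extension m K' ind (al - 1) (be + 1) 1) as
    (chi & Hchi & Hchi_eq & Hchi_D & Hchi_lt & Hchi_gt).
  - exact Hm.
  - apply closed_set_add_point, closed_set_add_point, HK.
  - left; right; reflexivity.
  - right; reflexivity.
  - intros x [[Hx| ->]| ->]; [apply Hbd in Hx|..]; lra.
  - intros eps Heps. exists 1. split; [lra|]. intros a b Ha Hb Hab.
    rewrite (Hlocal a b Ha Hb Hab), Rminus_diag, Rabs_R0.
    apply Rmult_le_pos; [lra|apply pow_le, Rabs_pos].
  - intros x _. unfold ind. destruct (Rlt_dec x al); [|destruct (Rlt_dec be x)];
      rewrite ?Rabs_R0, ?Rabs_R1; lra.
  - exists chi. split; [exact Hchi|split; [|split]].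
    + intros x Hx. rewrite Hchi_eq by (left; left; exact Hx). apply Hind, Hx.
    + intros x Hx. apply Hchi_D. left; left; exact Hx.
    + intros x [Hx|Hx]; [rewrite Hchi_lt, Hlo|rewrite Hchi_gt, Hhi]; auto.
Qed.

Lemma Cm_of_const_outside m (f : R -> R) c d A A' : (1 <= m)%nat -> Ck m f ->
  (forall x, x < c -> f x = A) -> (forall x, d < x -> f x = A') -> Cm m f.
Proof.
  intros Hm Hf HA HA'. split; [apply Hf|split; [apply Hf|]].
  destruct (continuous_bounded_on (Derive_n f m) c d) as [M [HM0 HM]]; [apply Hf|].
  exists M. intros x.
  assert (Hconst : forall A0, locally x (fun t => f t = A0) -> Rabs (Derive_n f m x) <= M).
  { intros A0 Hloc. rewrite (Derive_n_ext_loc f (fun _ => A0)) by exact Hloc.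
    destruct m; [lia|]. rewrite Derive_n_const, Rabs_R0. exact HM0. }
  destruct (Rlt_dec x c) as [Hxc|Hxc]; [|destruct (Rlt_dec d x) as [Hxd|Hxd]].
  - apply (Hconst A), (locally_open_interval _ (x - 1) c); [lra|]. intros; apply HA; lra.
  - apply (Hconst A'), (locally_open_interval _ d (x + 1)); [lra|]. intros; apply HA'; lra.
  - apply HM. lra.
Qed.

(** * Taylor polynomials and the A/V condition *)

Lemma taylor_S n p a x :
  taylor (S n) p a x = taylor n p a x + Derive_n p (S n) a / INR (fact (S n)) * (x - a) ^ S n.
Proof. unfold taylor. rewrite sum_Sn. reflexivity. Qed.

Lemma taylor_at n p a : taylor n p a a = p a.
Proof.
  induction n as [|n IH]; [unfold taylor; rewrite sum_O; simpl; field|].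
  rewrite taylor_S, IH, Rminus_diag, pow_i by lia. ring.
Qed.

Lemma is_derive_taylor n p a x : is_derive (taylor (S n) p a) x (taylor n (Derive p) a x).
Proof.
  induction n as [|n IH].
  - apply is_derive_ext with (fun x => p a + Derive p a * (x - a)).
    { intros t. rewrite taylor_S. unfold taylor. rewrite sum_O. simpl.
      change (Derive (fun y => p y) a) with (Derive p a). field. }
    unfold taylor. rewrite sum_O. auto_derive; [exact I|]. simpl. field.
  - apply is_derive_ext with (fun x => taylor (S n) p a x +
      Derive_n p (S (S n)) a / INR (fact (S (S n))) * (x - a) ^ S (S n)).
    { intros t. rewrite (taylor_S (S n)). reflexivity. }
    rewrite taylor_S, Derive_n_Derive.
    apply (is_derive_plus (taylor (S n) p a)); [exact IH|].
    replace (Derive_n p (S (S n)) a / INR (fact (S n)) * (x - a) ^ S n)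
      with (Derive_n p (S (S n)) a / INR (fact (S (S n))) * (INR (S (S n)) * (x - a) ^ S n)).
    + apply is_derive_scal. change (S n) with (pred (S (S n))) at 3.
      rewrite <- (Rmult_1_r (INR (S (S n)))).
      apply (is_derive_pow (fun t => t - a)). auto_derive; [exact I|ring].
    + rewrite (fact_simpl (S n)), mult_INR. field.
      split; [apply INR_fact_neq_0|apply not_0_INR; lia].
Qed.

Lemma Derive_taylor n p a x : Derive (taylor (S n) p a) x = taylor n (Derive p) a x.
Proof. apply is_derive_unique, is_derive_taylor. Qed.

Lemma continuous_taylor n p a x : continuous (taylor n p a) x.
Proof.
  apply ex_derive_continuous_R. destruct n as [|n].
  - apply ex_derive_ext with (fun _ => p a); [intros; unfold taylor; rewrite sum_O; simpl; field|].
    apply ex_derive_const.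
  - eexists. apply is_derive_taylor.
Qed.

Lemma continuous_Derive_taylor n p a x : continuous (Derive (taylor (S n) p a)) x.
Proof.
  apply continuous_ext with (taylor n (Derive p) a); [intros; symmetry; apply Derive_taylor|].
  apply continuous_taylor.
Qed.

Lemma taylor_sum_f_R0 n p a x :
  taylor n p a x = sum_f_R0 (fun k => (x - a) ^ k / INR (fact k) * Derive_n p k a) n.
Proof.
  unfold taylor. rewrite sum_n_Reals. apply sum_eq. intros k _.
  field. apply INR_fact_neq_0.
Qed.

Lemma taylor_remainder_unif n p c d : Ck n p -> forall eta, 0 < eta -> exists delta, 0 < delta /\
  forall a x, c <= a <= d -> a <= x -> x - a < delta ->
    Rabs (p x - taylor n p a x) <= eta * (x - a) ^ n.
Proof.
  intros [HD Hc] eta Heta.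
  destruct (Heine (Derive_n p n) (fun t => c <= t <= d + 1) (compact_P3 c (d + 1)))
    with (mkposreal eta Heta) as [del Hdel]; [intros t _; apply continuity_pt_filterlim, Hc|].
  exists (Rmin 1 del). split; [apply Rmin_pos; [lra|apply cond_pos]|].
  intros a x Ha Hax Hxa. pose proof (Rmin_l 1 del). pose proof (Rmin_r 1 del).
  assert (Hosc : forall z, a <= z <= x -> Rabs (Derive_n p n z - Derive_n p n a) <= eta).
  { intros z Hz. left. apply (Hdel z a); [lra|lra|]. rewrite Rabs_right; lra. }
  destruct n as [|n].
  - rewrite Rmult_1_r. unfold taylor. rewrite sum_O. simpl. rewrite Rdiv_1_r, Rmult_1_r.
    apply (Hosc x). lra.
  - destruct (Req_dec a x) as [<-|Hne].
    { rewrite taylor_at, Rminus_diag, Rminus_diag, Rabs_R0, pow_i by lia. lra. }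
    destruct (Taylor_Lagrange p n a x) as [z [Hz ->]]; [lra|intros; apply HD; auto|].
    rewrite taylor_sum_f_R0, tech5.
    replace (_ + _ - _) with ((x - a) ^ S n / INR (fact (S n)) *
      (Derive_n p (S n) z - Derive_n p (S n) a)) by ring.
    assert (Hfact : 1 <= INR (fact (S n))) by (apply (le_INR 1), lt_O_fact).
    assert (Hpow : 0 <= (x - a) ^ S n) by (apply pow_le; lra).
    rewrite Rabs_mult, Rabs_right
      by (apply Rle_ge, Rdiv_le_0_compat; [exact Hpow|lra]).
    rewrite Rmult_comm. apply Rmult_le_compat; [apply Rabs_pos|apply Rdiv_le_0_compat; lra|
      apply Hosc; lra|].
    rewrite <- (Rdiv_1_r ((x - a) ^ S n)) at 2. apply Rmult_le_compat_l; [exact Hpow|].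
    apply Rinv_le_contravar; lra.
Qed.

Definition horizontal_rate (f g : R -> R) (x : R) : R :=
  2 * (Derive f x * g x - f x * Derive g x).

Lemma Ck_horizontal_rate n f g : Ck (S n) f -> Ck (S n) g -> Ck n (horizontal_rate f g).
Proof.
  intros Hf Hg. pose proof (proj2 (proj1 (Ck_S n f) Hf)). pose proof (proj2 (proj1 (Ck_S n g) Hg)).
  apply Ck_scal, Ck_minus; apply Ck_mult; auto; apply (Ck_le (S n)); auto.
Qed.

Definition taylor_close (n : nat) (p : R -> R) (a b eta : R) : Prop :=
  forall x, a <= x <= b ->
    Rabs (p x - taylor (S n) p a x) <= eta * (b - a) ^ S n /\
    Rabs (Derive p x - Derive (taylor (S n) p a) x) <= eta * (b - a) ^ n.

Lemma taylor_close_bounded n p a b eta M : a <= b <= a + 1 -> 0 <= eta <= 1 ->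
  taylor_close n p a b eta ->
  (forall x, a <= x <= b -> Rabs (p x) <= M /\ Rabs (Derive p x) <= M) ->
  forall x, a <= x <= b ->
    Rabs (taylor (S n) p a x) <= M + 1 /\ Rabs (Derive (taylor (S n) p a) x) <= M + 1.
Proof.
  intros Hab Heta Hclose HM x Hx. destruct (Hclose x Hx) as [H0 H1]. destruct (HM x Hx) as [M0 M1].
  assert (Hsmall : forall k, eta * (b - a) ^ k <= 1).
  { intros k. rewrite <- (Rmult_1_r 1). apply Rmult_le_compat; [lra|apply pow_le; lra|lra|].
    rewrite <- (pow1 k). apply pow_incr. lra. }
  pose proof (Hsmall (S n)). pose proof (Hsmall n).
  pose proof (Rabs_triang_inv (taylor (S n) p a x) (p x)).
  pose proof (Rabs_triang_inv (Derive (taylor (S n) p a) x) (Derive p x)).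
  rewrite Rabs_minus_sym in H0, H1. split; lra.
Qed.

Section Increment.

Variables (n : nat) (f g h : R -> R) (a b M eta : R).
Hypotheses (Hf : Ck (S n) f) (Hg : Ck (S n) g) (Hab : a < b <= a + 1) (Heta : 0 <= eta <= 1).
Hypotheses (HMf : forall x, a <= x <= b -> Rabs (f x) <= M /\ Rabs (Derive f x) <= M)
  (HMg : forall x, a <= x <= b -> Rabs (g x) <= M /\ Rabs (Derive g x) <= M).
Hypotheses (Hcf : taylor_close n f a b eta) (Hcg : taylor_close n g a b eta).

Lemma Vq_bounds : 0 < Vq (S n) f g a b <= (2 * M + 3) * (b - a) ^ S n.
Proof.
  set (W := fun x => Rabs (Derive (taylor (S n) f a) x) + Rabs (Derive (taylor (S n) g a) x)).
  assert (HW : ex_RInt W a b).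
  { apply ex_RInt_continuous_R. intros x. apply (Ck_continuous 0).
    apply Ck_plus; apply Ck_0_continuous; intros y;
      apply continuous_Rabs_comp, continuous_Derive_taylor. }
  assert (HW0 : 0 <= RInt W a b).
  { apply RInt_ge_0; [lra|exact HW|]. intros x _. unfold W.
    pose proof (Rabs_pos (Derive (taylor (S n) f a) x)).
    pose proof (Rabs_pos (Derive (taylor (S n) g a) x)). lra. }
  assert (HW1 : RInt W a b <= (b - a) * (2 * M + 2)).
  { eapply Rle_trans; [apply Rle_abs|]. apply abs_RInt_le_const; [lra|exact HW|].
    intros x Hx. unfold W.
    rewrite Rabs_right by (apply Rle_ge, Rplus_le_le_0_compat; apply Rabs_pos).
    pose proof (taylor_close_bounded n f a b eta M ltac:(lra) Heta Hcf HMf x Hx).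
    pose proof (taylor_close_bounded n g a b eta M ltac:(lra) Heta Hcg HMg x Hx). lra. }
  assert (Hp : 0 < (b - a) ^ S n) by (apply pow_lt; lra).
  assert (Hp1 : (b - a) ^ S n <= 1) by (rewrite <- (pow1 (S n)); apply pow_incr; lra).
  unfold Vq. fold W.
  replace (2 * S n)%nat with (S n + S n)%nat by lia. rewrite pow_add.
  assert (0 <= (b - a) ^ S n * RInt W a b) by (apply Rmult_le_pos; lra).
  assert ((b - a) ^ S n * RInt W a b <= (b - a) ^ S n * (2 * M + 2))
    by (apply Rmult_le_compat_l; [lra|]; eapply Rle_trans; [exact HW1|]; nra).
  split; nra.
Qed.

Lemma taylor_product_close p r x : a <= x <= b ->
  (forall y, a <= y <= b -> Rabs (p y) <= M /\ Rabs (Derive p y) <= M) ->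
  (forall y, a <= y <= b -> Rabs (r y) <= M /\ Rabs (Derive r y) <= M) ->
  taylor_close n p a b eta -> taylor_close n r a b eta ->
  Rabs (Derive (taylor (S n) p a) x * taylor (S n) r a x - Derive p x * r x)
    <= eta * (b - a) ^ n * (2 * M + 1).
Proof.
  intros Hx HMp HMr Hcp Hcr.
  destruct (Hcp x Hx) as [_ Hp1]. destruct (Hcr x Hx) as [Hr0 _]. destruct (HMp x Hx) as [_ Mp1].
  destruct (taylor_close_bounded n r a b eta M ltac:(lra) Heta Hcr HMr x Hx) as [Tr _].
  assert (Hr0' : Rabs (r x - taylor (S n) r a x) <= eta * (b - a) ^ n).
  { eapply Rle_trans; [exact Hr0|]. apply Rmult_le_compat_l; [lra|].
    apply pow_le_pow_le1; [lra|lia]. }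
  replace (_ - _) with ((Derive (taylor (S n) p a) x - Derive p x) * taylor (S n) r a x
                        + Derive p x * (taylor (S n) r a x - r x)) by ring.
  eapply Rle_trans; [apply Rabs_triang|]. rewrite !Rabs_mult.
  rewrite Rabs_minus_sym in Hp1, Hr0'.
  assert (0 <= eta * (b - a) ^ n) by (apply Rmult_le_pos; [lra|apply pow_le; lra]).
  apply Rle_trans with (eta * (b - a) ^ n * (M + 1) + M * (eta * (b - a) ^ n)); [|lra].
  apply Rplus_le_compat; apply Rmult_le_compat; try apply Rabs_pos; lra.
Qed.

Lemma horizontal_rate_taylor_close x : a <= x <= b ->
  Rabs (horizontal_rate (taylor (S n) f a) (taylor (S n) g a) x - horizontal_rate f g x)
    <= eta * (b - a) ^ n * (8 * M + 4).
Proof.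
  intros Hx. unfold horizontal_rate.
  pose proof (taylor_product_close f g x Hx HMf HMg Hcf Hcg) as Hfg.
  pose proof (taylor_product_close g f x Hx HMg HMf Hcg Hcf) as Hgf.
  set (dfg := Derive (taylor (S n) f a) x * taylor (S n) g a x - Derive f x * g x) in Hfg.
  set (dgf := Derive (taylor (S n) g a) x * taylor (S n) f a x - Derive g x * f x) in Hgf.
  replace (_ - _) with (2 * (dfg - dgf)) by (unfold dfg, dgf; ring).
  rewrite Rabs_mult, Rabs_right by lra. unfold Rminus at 1.
  pose proof (Rabs_triang dfg (- dgf)). rewrite Rabs_Ropp in *. lra.
Qed.

(* The integrand of [Aq] is half the horizontal rate of the pair of Taylor polynomials. *)
Lemma increment_decomposition :
  (h b - RInt (horizontal_rate f g) 0 b) - (h a - RInt (horizontal_rate f g) 0 a)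
    - Aq (S n) f g h a b
  = RInt (fun x => horizontal_rate (taylor (S n) f a) (taylor (S n) g a) x
                   - horizontal_rate f g x) a b
    - 2 * f a * (g b - taylor (S n) g a b) + 2 * g a * (f b - taylor (S n) f a b).
Proof.
  set (F := horizontal_rate f g).
  set (H := horizontal_rate (taylor (S n) f a) (taylor (S n) g a)).
  assert (HF : ex_RInt F a b /\ forall c, ex_RInt F 0 c).
  { split; [|intros c]; apply ex_RInt_continuous_R, (Ck_continuous n), Ck_horizontal_rate;
      assumption. }
  assert (HH : ex_RInt H a b).
  { apply ex_RInt_continuous_R. intros x. apply (Ck_continuous 0).
    apply Ck_scal, Ck_minus; apply Ck_mult; apply Ck_0_continuous; intros y;
      first [apply continuous_Derive_taylor|apply continuous_taylor]. }
  assert (HChasles : RInt F 0 b - RInt F 0 a = RInt F a b).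
  { rewrite <- (RInt_Chasles (V := R_CompleteNormedModule) F 0 a b) by apply HF.
    change (RInt F 0 a + RInt F a b - RInt F 0 a = RInt F a b). ring. }
  assert (Hminus : RInt (fun x => H x - F x) a b = RInt H a b - RInt F a b)
    by exact (RInt_minus (V := R_CompleteNormedModule) H F a b HH (proj1 HF)).
  assert (Hscal : RInt H a b = 2 * RInt (fun x => Derive (taylor (S n) f a) x * taylor (S n) g a x
                                     - Derive (taylor (S n) g a) x * taylor (S n) f a x) a b).
  { rewrite <- (RInt_scal (V := R_CompleteNormedModule)).
    - apply RInt_ext. intros x _. unfold H, horizontal_rate, scal. simpl. unfold mult. simpl.
      ring.
    - apply ex_RInt_continuous_R. intros x. apply (Ck_continuous 0).
      apply Ck_minus; apply Ck_mult; apply Ck_0_continuous; intros y;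
        first [apply continuous_Derive_taylor|apply continuous_taylor]. }
  rewrite Hminus, Hscal, <- HChasles. unfold Aq. ring.
Qed.

Lemma increment_near_Aq :
  Rabs ((h b - RInt (horizontal_rate f g) 0 b) - (h a - RInt (horizontal_rate f g) 0 a)
        - Aq (S n) f g h a b) <= eta * (12 * M + 4) * (b - a) ^ S n.
Proof.
  rewrite increment_decomposition.
  assert (HI : Rabs (RInt (fun x => horizontal_rate (taylor (S n) f a) (taylor (S n) g a) x
                                    - horizontal_rate f g x) a b)
               <= (b - a) * (eta * (b - a) ^ n * (8 * M + 4))).
  { apply abs_RInt_le_const; [lra| |exact horizontal_rate_taylor_close].
    apply ex_RInt_continuous_R. intros x. apply (Ck_continuous 0).
    apply Ck_minus; [apply Ck_scal, Ck_minus; apply Ck_mult; apply Ck_0_continuous; intros y;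
      first [apply continuous_Derive_taylor|apply continuous_taylor]|].
    apply (Ck_le n), Ck_horizontal_rate; [lia|assumption..]. }
  assert (Hboundary : forall p r, taylor_close n p a b eta ->
    (forall y, a <= y <= b -> Rabs (r y) <= M /\ Rabs (Derive r y) <= M) ->
    Rabs (2 * r a * (p b - taylor (S n) p a b)) <= 2 * M * (eta * (b - a) ^ S n)).
  { intros p r Hcp HMr. destruct (Hcp b ltac:(lra)) as [Hp0 _].
    destruct (HMr a ltac:(lra)) as [Mr _]. rewrite !Rabs_mult, (Rabs_right 2) by lra.
    apply Rmult_le_compat; [apply Rmult_le_pos; [lra|apply Rabs_pos]|apply Rabs_pos|lra|].
    exact Hp0. }
  pose proof (Hboundary g f Hcg HMf). pose proof (Hboundary f g Hcf HMg).
  replace (eta * (12 * M + 4) * (b - a) ^ S n)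
    with ((b - a) * (eta * (b - a) ^ n * (8 * M + 4)) + 2 * M * (eta * (b - a) ^ S n)
          + 2 * M * (eta * (b - a) ^ S n)) by (simpl; ring).
  eapply Rle_trans; [apply Rabs_triang|]. apply Rplus_le_compat; [|assumption].
  unfold Rminus. eapply Rle_trans; [apply Rabs_triang|]. rewrite Rabs_Ropp.
  apply Rplus_le_compat; assumption.
Qed.

Lemma increment_le epsA : Rabs (Aq (S n) f g h a b / Vq (S n) f g a b) < epsA ->
  Rabs ((h b - RInt (horizontal_rate f g) 0 b) - (h a - RInt (horizontal_rate f g) 0 a))
    <= (epsA * (2 * M + 3) + eta * (12 * M + 4)) * (b - a) ^ S n.
Proof.
  intros HA. destruct Vq_bounds as [HV0 HV1].
  assert (HAq : Rabs (Aq (S n) f g h a b) <= epsA * ((2 * M + 3) * (b - a) ^ S n)).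
  { replace (Aq (S n) f g h a b) with (Aq (S n) f g h a b / Vq (S n) f g a b * Vq (S n) f g a b)
      by (field; lra).
    rewrite Rabs_mult, (Rabs_right (Vq _ _ _ _ _)) by lra.
    apply Rmult_le_compat; [apply Rabs_pos|lra|lra|exact HV1]. }
  pose proof increment_near_Aq.
  match goal with |- Rabs ?D <= _ => replace D with (Aq (S n) f g h a b + (D - Aq (S n) f g h a b))
    by ring end.
  eapply Rle_trans; [apply Rabs_triang|]. lra.
Qed.

End Increment.

Lemma taylor_close_eventually n p c d : Ck (S n) p -> forall eta, 0 < eta ->
  exists delta, 0 < delta /\ forall a b, c <= a <= d -> a < b -> b - a < delta ->
    taylor_close n p a b eta.
Proof.
  intros Hp eta Heta.
  destruct (taylor_remainder_unif (S n) p c d Hp eta Heta) as [d0 [Hd0 H0]].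
  destruct (taylor_remainder_unif n (Derive p) c d (proj2 (proj1 (Ck_S n p) Hp)) eta Heta)
    as [d1 [Hd1 H1]].
  exists (Rmin d0 d1). split; [apply Rmin_pos; assumption|].
  intros a b Ha Hab Hd x Hx. pose proof (Rmin_l d0 d1). pose proof (Rmin_r d0 d1).
  split; [|rewrite Derive_taylor];
    (eapply Rle_trans; [first [apply H0|apply H1]; lra|]);
    apply Rmult_le_compat_l; try lra; apply pow_incr; lra.
Qed.

Lemma Ck_S_bounded_on n p c d : Ck (S n) p -> exists M, 0 <= M /\
  forall x, c <= x <= d -> Rabs (p x) <= M /\ Rabs (Derive p x) <= M.
Proof.
  intros Hp.
  destruct (continuous_bounded_on p c d) as [M0 [HM0 H0]]; [apply (Ck_continuous (S n)), Hp|].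
  destruct (continuous_bounded_on (Derive p) c d) as [M1 [HM1 H1]];
    [apply (Ck_continuous n), (Ck_S n p), Hp|].
  exists (M0 + M1). split; [lra|]. intros x Hx. pose proof (H0 x Hx). pose proof (H1 x Hx). lra.
Qed.

Lemma flat_of_AV m f g h K al be : (1 <= m)%nat -> Ck m f -> Ck m g ->
  (forall x, K x -> al <= x <= be) -> AV_condition m f g h K ->
  flat_on m K (fun x => h x - RInt (horizontal_rate f g) 0 x).
Proof.
  intros Hm Hf Hg Hbd HAV. destruct m as [|n]; [lia|].
  destruct (Ck_S_bounded_on n f al be Hf) as [Mf [HMf0 HMf]].
  destruct (Ck_S_bounded_on n g al be Hg) as [Mg [HMg0 HMg]].
  set (M := Mf + Mg).
  apply flat_on_of_forward. intros eps Heps.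
  set (epsA := eps / (2 * (2 * M + 3))).
  assert (HepsA : 0 < epsA) by (unfold epsA, M; apply Rdiv_lt_0_compat; lra).
  set (eta := Rmin 1 (eps / (2 * (12 * M + 4)))).
  assert (Heta : 0 < eta <= 1)
    by (split; [apply Rmin_pos; [|unfold M; apply Rdiv_lt_0_compat]; lra|apply Rmin_l]).
  assert (Hconst : epsA * (2 * M + 3) + eta * (12 * M + 4) <= eps).
  { assert (eta * (12 * M + 4) <= eps / (2 * (12 * M + 4)) * (12 * M + 4))
      by (apply Rmult_le_compat_r; [unfold M; lra|apply Rmin_r]).
    replace (eps / (2 * (12 * M + 4)) * (12 * M + 4)) with (eps / 2) in * by (field; unfold M; lra).
    replace (epsA * (2 * M + 3)) with (eps / 2) by (unfold epsA; field; unfold M; lra). lra. }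
  destruct (taylor_close_eventually n f al be Hf eta ltac:(lra)) as [df [Hdf Hcf]].
  destruct (taylor_close_eventually n g al be Hg eta ltac:(lra)) as [dg [Hdg Hcg]].
  destruct (HAV epsA HepsA) as [dA [HdA HA]].
  exists (Rmin (Rmin 1 dA) (Rmin df dg)). split; [repeat apply Rmin_pos; lra|].
  intros a b Ha Hb [Hab Hd].
  pose proof (Rmin_l (Rmin 1 dA) (Rmin df dg)). pose proof (Rmin_r (Rmin 1 dA) (Rmin df dg)).
  pose proof (Rmin_l 1 dA). pose proof (Rmin_r 1 dA). pose proof (Rmin_l df dg).
  pose proof (Rmin_r df dg). pose proof (Hbd a Ha). pose proof (Hbd b Hb).
  apply Rle_trans with ((epsA * (2 * M + 3) + eta * (12 * M + 4)) * (b - a) ^ S n).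
  - apply increment_le; try assumption; try lra.
    + intros x Hx. destruct (HMf x ltac:(lra)). unfold M. lra.
    + intros x Hx. destruct (HMg x ltac:(lra)). unfold M. lra.
    + apply Hcf; lra.
    + apply Hcg; lra.
    + apply HA; auto; lra.
  - apply Rmult_le_compat_r; [apply pow_le; lra|exact Hconst].
Qed.

Lemma horizontal_extension m f g h K al be : (1 <= m)%nat -> Ck m f -> Ck m g -> Ck m h ->
  closed_set K -> K al -> K be -> (forall x, K x -> al <= x <= be) ->
  flat_on m K (fun x => h x - RInt (horizontal_rate f g) 0 x) ->
  exists hh, Cm m hh /\ (forall x, K x -> hh x = h x) /\
    (forall x, K x -> Derive hh x = horizontal_rate f g x).
Proof.
  intros Hm Hf Hg Hh HK Hal Hbe Hbd Hflat. destruct m as [|n]; [lia|].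
  set (F := horizontal_rate f g). set (G := fun x => RInt F 0 x). set (u := fun x => h x - G x).
  assert (HF : Ck n F) by (apply Ck_horizontal_rate; assumption).
  assert (HG : Ck (S n) G) by (apply Ck_RInt, HF).
  destruct (continuous_bounded_on u al be) as [Bu [_ HBu]];
    [apply (Ck_continuous (S n)), Ck_minus; assumption|].
  destruct (whitney_flat_extension (S n) K u al be Bu) as
    (phi & Hphi & Hphi_eq & Hphi_D & Hphi_lt & Hphi_gt);
    [lia|assumption..|intros x Hx; apply HBu, Hbd, Hx|].
  destruct (smooth_cutoff (S n) K al be) as (chi & Hchi & Hchi_eq & Hchi_D & Hchi_out);
    [lia|assumption..|].
  pose proof (Hbd al Hal).
  (* [chi] removes the part of [G] far from [K], whose [m]-th derivative may be unbounded. *)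
  exists (fun x => chi x * G x + phi x). split; [|split].
  - apply (Cm_of_const_outside (S n) _ (al - 1) (be + 1) (u al) (u be));
      [lia|apply Ck_plus; [apply Ck_mult|]; assumption| |]; intros x Hx.
    + rewrite Hchi_out by (left; lra). rewrite Hphi_lt by lra. ring.
    + rewrite Hchi_out by (right; lra). rewrite Hphi_gt by lra. ring.
  - intros x Hx. rewrite Hchi_eq, Hphi_eq by exact Hx. unfold u. ring.
  - intros x Hx.
    assert (HGd : is_derive G x (F x)) by (apply (is_derive_primitive F), (Ck_continuous n), HF).
    assert (HGex : ex_derive G x) by (exists (F x); exact HGd).
    assert (Hchid : ex_derive chi x) by (apply (proj1 Hchi 1%nat); lia).
    assert (Hphid : ex_derive phi x) by (apply (proj1 Hphi 1%nat); lia).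
    rewrite Derive_plus by (try apply (ex_derive_mult chi G); assumption).
    rewrite (Derive_mult chi G), (is_derive_unique _ _ _ HGd), Hchi_D, Hchi_eq, Hphi_D
      by assumption.
    ring.
Qed.

Theorem lemma3p5 (m : nat) (f g h : R -> R) (K : R -> Prop) :
  (0 < m)%nat -> Cm m f -> Cm m g -> Cm m h -> compact K ->
  AV_condition m f g h K ->
  exists hh : R -> R, Cm m hh /\
    (forall x, K x -> hh x = h x) /\
    (forall x, K x -> Derive hh x = 2 * (Derive f x * g x - f x * Derive g x)).
Proof.
  intros Hm Hf Hg Hh HK HAV.
  destruct (classic (exists x, K x)) as [[x0 Hx0]|Hempty].
  - destruct (compact_attains_bounds K x0 HK Hx0) as (al & be & Hal & Hbe & Hbd).
    assert (Hck : forall p, Cm m p -> Ck m p) by (intros p [Hp1 [Hp2 _]]; split; assumption).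
    apply (horizontal_extension m f g h K al be); auto; [apply compact_P2, HK|].
    apply (flat_of_AV m f g h K al be); auto.
  - exists h. split; [exact Hh|split; intros x Hx; exfalso; exact (Hempty (ex_intro _ x Hx))].
Qed.
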